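(* Let $n,d \in \mathbb{Z}^+$. Let $A$ be a C-recursive integer sequence of order $d$ with initial conditions $A(0)=A(1)=\cdots=A(d-1)=1$, satisfying $$A(n) = c_{d-1} A(n-1) + c_{d-2} A(n-2) + \cdots + c_{0} A(n-d),$$ where $c_0,\dots,c_{d-1}\in\mathbb{Z}$. Let $g(x) := c_{d-1}x^{d-1}+\cdots+c_1x+c_0 \in \mathbb{Z}[x]$, let $R=\mathbb{Z}[x]/I$ with $I=\langle x^d-g(x)\rangle$, and let $f(x)$ be the image of $x^n$ in $R$. Then $A(n)=f(1)$.
   Context: The image of $x^n$ in $R$ is identified with its unique representative in $\mathbb{Z}[x]$ of degree less than $d$ (the remainder of $x^n$ upon division by the monic polynomial $x^d-g(x)$); $f(1)$ denotes the evaluation of this representative at $x=1$. *)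

From mathcomp Require Import all_boot all_order all_algebra.
Set Implicit Arguments. Unset Strict Implicit. Unset Printing Implicit Defensive.
Import Order.TTheory GRing.Theory Num.Theory.
Local Open Scope ring_scope.

Definition gpoly (d : nat) (c : nat -> int) : {poly int} :=
  \sum_(i < d) c i *: 'X^i.

(* representative of x^n in Z[x]/<x^d - g(x)>: remainder of x^n mod the monic x^d - g *)
Definition xn_rep (d n : nat) (c : nat -> int) : {poly int} :=
  'X^n %% ('X^d - gpoly d c).

From mathcomp Require Import all_boot all_order all_algebra.
Import Order.TTheory GRing.Theory Num.Theory.
Local Open Scope ring_scope.

(* The umbral functional [L_A : p |-> sum_i p_i A(i)] sends [x^m] to [A(m)].
   It kills [x^d - g] by the recurrence at [m = d]; as [L_A (x p) = L_A' p] for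
   the shifted sequence [A'(i) = A(i+1)], which satisfies the same recurrence,
   induction on [q] shows that [L_A] kills every [q (x^d - g)].  Hence [A(n)] is
   [L_A] of the remainder of [x^n], of degree [< d], where [A] is [1] and so
   [L_A] is evaluation at [1]. *)

Section Umbral.
Context {R : nzRingType}.

Definition umbral (A : nat -> R) (p : {poly R}) : R :=
  \sum_(i < size p) p`_i * A i.

Lemma umbral_wide (A : nat -> R) {p : {poly R}} {N : nat} : (size p <= N)%N ->
  umbral A p = \sum_(i < N) p`_i * A i.
Proof.
move=> le_pN; rewrite /umbral (big_ord_widen N (fun i => p`_i * A i) le_pN).
rewrite big_mkcond /=; apply: eq_bigr => i _.
by case: ltnP => // le_p_i; rewrite nth_default ?mul0r.
Qed.

Lemma umbralD (A : nat -> R) (p q : {poly R}) : umbral A (p + q) = umbral A p + umbral A q.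
Proof.
rewrite (umbral_wide A (size_polyD p q)) (umbral_wide A (leq_maxl (size p) (size q))).
rewrite (umbral_wide A (leq_maxr (size p) (size q))) -big_split /=.
by apply: eq_bigr => i _; rewrite coefD mulrDl.
Qed.

Lemma umbralZ (A : nat -> R) a (p : {poly R}) : umbral A (a *: p) = a * umbral A p.
Proof.
rewrite (umbral_wide A (size_scale_leq a p)) /umbral mulr_sumr.
by apply: eq_bigr => i _; rewrite coefZ mulrA.
Qed.

Lemma umbral0 (A : nat -> R) : umbral A 0 = 0.
Proof. by rewrite /umbral size_poly0 big_ord0. Qed.

Lemma umbralXn (A : nat -> R) m : umbral A 'X^m = A m.
Proof.
rewrite /umbral size_polyXn big_ord_recr /= coefXn eqxx mul1r big1 ?add0r //.
by move=> i _; rewrite coefXn (ltn_eqF (ltn_ord i)) mul0r.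
Qed.

Lemma umbral_mulX (A : nat -> R) (p : {poly R}) : umbral A ('X * p) = umbral (fun i => A i.+1) p.
Proof.
have le_Xp : (size ('X * p)%R <= (size p).+1)%N.
  by rewrite (leq_trans (size_polyMleq _ _)) // size_polyX.
rewrite (umbral_wide A le_Xp) big_ord_recl coefXM /= mul0r add0r.
by apply: eq_bigr => i _; rewrite coefXM.
Qed.

Lemma umbral_const1 {A : nat -> R} {p : {poly R}} {d : nat} : (forall k, (k < d)%N -> A k = 1) ->
  (size p <= d)%N -> umbral A p = p.[1].
Proof.
move=> A1 le_pd; rewrite (umbral_wide A le_pd) (horner_coef_wide 1 le_pd).
by apply: eq_bigr => i _; rewrite A1 // expr1n.
Qed.

Definition rec_charpoly (d : nat) (c : nat -> R) : {poly R} :=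
  'X^d - \poly_(i < d) c i.

Lemma size_rec_charpoly d (c : nat -> R) : size (rec_charpoly d c) = d.+1.
Proof.
by rewrite size_polyDl size_polyXn // size_polyN ltnS size_poly.
Qed.

Lemma rec_charpoly_monic d (c : nat -> R) : rec_charpoly d c \is monic.
Proof.
by rewrite monicE lead_coefDl ?lead_coefXn // size_polyXn size_polyN ltnS size_poly.
Qed.

Definition satisfies_rec (d : nat) (c : nat -> R) (A : nat -> R) :=
  forall m, (d <= m)%N -> A m = \sum_(i < d) c i * A (m - d + i)%N.

Lemma satisfies_rec_shift d (c A : nat -> R) :
  satisfies_rec d c A -> satisfies_rec d c (fun i => A i.+1).
Proof.
move=> recA m le_dm; rewrite recA ?(leq_trans le_dm) //.
by apply: eq_bigr => i _; rewrite -addSn subSn.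
Qed.

Lemma umbral_rec_charpoly d (c A : nat -> R) :
  satisfies_rec d c A -> umbral A (rec_charpoly d c) = 0.
Proof.
move=> recA; rewrite (umbral_wide A (eq_leq (size_rec_charpoly d c))).
rewrite big_ord_recr /= coefB coefXn eqxx coef_poly ltnn subr0 mul1r.
rewrite recA // subnn -big_split big1 // => i _ /=.
by rewrite coefB coefXn coef_poly ltn_ord (ltn_eqF (ltn_ord i)) sub0r mulNr addNr.
Qed.

Lemma umbral_mul_rec_charpoly d (c A : nat -> R) (q : {poly R}) :
  satisfies_rec d c A -> umbral A (q * rec_charpoly d c) = 0.
Proof.
elim/poly_ind: q A => [|q a IHq] A recA; first by rewrite mul0r umbral0.
rewrite mulrDl commr_polyX -mulrA umbralD umbral_mulX IHq; last first.
  exact: satisfies_rec_shift.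
by rewrite mul_polyC umbralZ umbral_rec_charpoly ?mulr0 ?addr0.
Qed.

End Umbral.

Theorem lemma3p1 (n d : nat) (c : nat -> int) (A : nat -> int) :
  (0 < n)%N -> (0 < d)%N ->
  (forall k, (k < d)%N -> A k = 1) ->
  (forall m, (d <= m)%N -> A m = \sum_(i < d) c i * A (m - d + i)%N) ->
  A n = (xn_rep d n c).[1].
Proof.
move=> _ _ A1 recA.
have charE : 'X^d - gpoly d c = rec_charpoly d c by rewrite /rec_charpoly poly_def.
have le_rem_d : (size (xn_rep d n c) <= d)%N.
  rewrite -ltnS -(size_rec_charpoly d c) /xn_rep charE ltn_modpN0 //.
  exact: monic_neq0 (rec_charpoly_monic d c).
rewrite -(umbral_const1 A1 le_rem_d) -umbralXn.
rewrite {1}(Pdiv.IdomainMonic.divp_eq (rec_charpoly_monic d c) 'X^n).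
by rewrite umbralD umbral_mul_rec_charpoly // add0r /xn_rep charE.
Qed.
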